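(* Let $X\subseteq\mathcal A^{\mathbb Z}$ be a subshift generated by an everywhere growing directive sequence $\overleftarrow\sigma=(\sigma_n:\mathcal A_{n+1}^*\to\mathcal A_n^* )_{n\ge0}$ with $\mathcal A_0=\mathcal A$ and of finite alphabet rank. Assume that for every $n\ge0$ the incidence matrix $M(\sigma_n)$ is invertible over $\mathbb R$. Then any shift-invariant measure $\mu$ on $X$ is determined by the values $\mu([a])$, $a\in\mathcal A$; i.e. two invariant measures $\mu,\mu'$ on $X$ with $\mu([a])=\mu'([a])$ for all $a\in\mathcal A$ are equal.
   Context: Directive sequence: non-erasing monoid morphisms $\sigma_n:\mathcal A_{n+1}^*\to\mathcal A_n^*$ over finite alphabets, $\sigma_{[0,n)}=\sigma_0\circ\cdots\circ\sigma_{n-1}$; it generates the subshift of all $\mathbf x\in\mathcal A_0^{\mathbb Z}$ whose finite factors are factors of some $\sigma_{[0,n)}(a)$, $a\in\mathcal A_n$. Everywhere growing: $\min_{a\in\mathcal A_n}|\sigma_{[0,n)}(a)|\to\infty$. Finite alphabet rank: the cardinalities $\mathrm{card}(\mathcal A_n)$ are bounded. Incidence matrix $M(\sigma)=(|\sigma(a)|_b)_{b\in\mathcal B,a\in\mathcal A}$. $[a]=\{\mathbf x:x_1=a\}$. *)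

From HB Require Import structures.
From mathcomp Require Import all_boot all_order all_algebra.
From mathcomp Require Import all_classical all_reals all_analysis.
Set Implicit Arguments. Unset Strict Implicit. Unset Printing Implicit Defensive.
Import Order.TTheory GRing.Theory Num.Theory.
Local Open Scope classical_set_scope.
Local Open Scope ring_scope.

(* A directive sequence: alphabets [A n] (finite types) and morphisms
   sigma n : A (n+1)^* -> A n^*, given by their images of letters. *)

Definition subst_word (B C : Type) (s : C -> seq B) (w : seq C) : seq B :=
  flatten (map s w).

(* sigma_[0,n) = sigma_0 o ... o sigma_(n-1) : A n^* -> A 0^* *)
Fixpoint sigma0n (A : nat -> Type) (sigma : forall n, A n.+1 -> seq (A n))
  (n : nat) : seq (A n) -> seq (A 0%N) :=
  match n return seq (A n) -> seq (A 0%N) with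
  | 0 => fun w => w
  | m.+1 => fun w => @sigma0n A sigma m (subst_word (sigma m) w)
  end.
Arguments sigma0n {A} sigma n w.

Definition non_erasing (A : nat -> finType) (sigma : forall n, A n.+1 -> seq (A n)) :=
  forall n (a : A n.+1), sigma n a <> [::].

Definition everywhere_growing (A : nat -> finType) (sigma : forall n, A n.+1 -> seq (A n)) :=
  forall N : nat, exists n0 : nat, forall n, (n0 <= n)%N ->
    forall a : A n, (N <= size (sigma0n sigma n [:: a]))%N.

Definition finite_alphabet_rank (A : nat -> finType) :=
  exists K : nat, forall n, (#|A n| <= K)%N.

Definition incidence_matrix (R : nzRingType) (A : nat -> finType)
  (sigma : forall n, A n.+1 -> seq (A n)) (n : nat) : 'M[R]_(#|A n|, #|A n.+1|) :=
  \matrix_(i < #|A n|, j < #|A n.+1|)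
     (count_mem (enum_val i) (sigma n (enum_val j)))%:R.

Definition mx_invertible (R : nzRingType) m n (M : 'M[R]_(m, n)) :=
  exists N : 'M[R]_(n, m), M *m N = 1%:M /\ N *m M = 1%:M.

(* configurations A^Z; the parameter b only provides the point required
   by MathComp-Analysis' measurable-space structure *)
Definition config (B : finType) (b : B) : Type := int -> B.
HB.instance Definition _ (B : finType) (b : B) := Choice.on (config b).
HB.instance Definition _ (B : finType) (b : B) :=
  isPointed.Build (config b) (fun _ => b).

Definition factor_at (B : Type) (x : int -> B) (i : int) (k : nat) : seq B :=
  [seq x (i + j%:Z) | j <- iota 0 k].

Definition gen_subshift (A : nat -> finType) (sigma : forall n, A n.+1 -> seq (A n))
  (b : A 0%N) : set (config b) :=
  [set x | forall (i : int) (k : nat), exists n (a : A n),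
      infix (factor_at x i k) (sigma0n sigma n [:: a])].

(* cylinder sets {x | x_i = a}; they generate the Borel sigma-algebra of
   the product topology on A^Z *)
Definition cylinders (B : finType) (b : B) : set (set (config b)) :=
  [set C | exists (i : int) (a : B), C = [set x | x i = a]].

Definition shift_space (B : finType) (b : B) := g_sigma_algebraType (@cylinders B b).

Definition shift (B : finType) (b : B) (x : shift_space b) : shift_space b :=
  fun i => x (i + 1).

Definition letter_cyl (B : finType) (b : B) (a : B) : set (shift_space b) :=
  [set x | x 1 = a].

Definition invariant_measure_on (R : realType) (B : finType) (b : B)
  (X : set (shift_space b)) (mu : probability (shift_space b) R) :=
  (mu X = 1)%E /\
  forall E : set (shift_space b), measurable E ->
    mu (@shift B b @^-1` E) = mu E.

Arguments gen_subshift {A} sigma b.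
Arguments cylinders {B} b.
Arguments shift_space {B} b.
Arguments shift {B} b x.
Arguments letter_cyl {B} b a.
Arguments invariant_measure_on {R B b} X mu.

From Pilot Require Import Defs.
From HB Require Import structures.
From mathcomp Require Import all_boot all_order all_algebra.
From mathcomp Require Import all_classical all_reals all_analysis.
From mathcomp Require Import zify ring lra.
Local Open Scope classical_set_scope.
Local Open Scope ring_scope.
Set Implicit Arguments. Unset Strict Implicit. Unset Printing Implicit Defensive.
Import Order.TTheory GRing.Theory Num.Theory.

(* Fix a nonempty word w and a length N, and a level n at which every
   sigma_[0,n)(a) has length at least N.  Invertibility of the incidence
   matrices gives M(sigma_[0,n)) a left inverse, hence weights F on letters with
   |sigma_[0,n)(a)|_w = sum_c F(c) |sigma_[0,n)(a)|_c for every a in A_n.  The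
   discrepancy D(v) = |v|_w - sum_c F(c) |v|_c is additive up to |w| under
   concatenation and vanishes on the words sigma_[0,n)(a); as every factor of X
   lies inside a concatenation of such words, |D| = O(1 + |w| L / N) on factors
   of length L.  Averaging D over the cylinders of length L against an invariant
   measure mu on X gives (L - |w| + 1) mu[w] - L sum_c F(c) mu[c], so two
   invariant measures agreeing on letters satisfy |mu[w] - mu'[w]| <= 2 |w| / N
   for all N.  They thus agree on all cylinders, hence everywhere by the
   pi-lambda theorem. *)

Section Occurrences.
Variable B : eqType.
Implicit Types w v x y : seq B.

Definition occurs_at w v i : bool := take (size w) (drop i v) == w.

Definition occurrences w v : nat := (\sum_(0 <= i < size v) occurs_at w v i)%N.

Lemma sum_bool_nat_le m n (P : nat -> bool) : (\sum_(m <= i < n) P i <= n - m)%N.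
Proof.
apply: (@leq_trans (\sum_(m <= i < n) 1)%N); last by rewrite sum_nat_const_nat muln1.
by apply: leq_sum => i _; apply: leq_b1.
Qed.

Lemma occurrences_le_size w v : (occurrences w v <= size v)%N.
Proof. by have := sum_bool_nat_le 0 (size v) (occurs_at w v); rewrite subn0. Qed.

Lemma occurrences_cat w x y : occurrences w (x ++ y) =
  (\sum_(0 <= i < size x) occurs_at w (x ++ y) i + occurrences w y)%N.
Proof.
rewrite /occurrences size_cat (@big_cat_nat _ _ _ (size x)) ?leq_addr //=.
congr (_ + _)%N; rewrite -{1}(add0n (size x)) big_addn addKn.
by apply: eq_bigr => i _; rewrite /occurs_at drop_cat ltnNge leq_addl addnK.
Qed.

Lemma occurrences_cat_ge w x y :
  (occurrences w x + occurrences w y <= occurrences w (x ++ y))%N.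
Proof.
rewrite occurrences_cat leq_add2r /occurrences big_seq [X in (_ <= X)%N]big_seq.
apply: leq_sum => i; rewrite mem_index_iota => /andP [_ ix].
rewrite /occurs_at drop_cat ix; case: eqP => // occ_w.
have w_fits : (size w <= size (drop i x))%N.
  by rewrite -{1}occ_w size_take_min geq_minr.
by rewrite takel_cat // occ_w eqxx.
Qed.

Lemma occurrences_cat_le w x y :
  (occurrences w (x ++ y) <= occurrences w x + occurrences w y + size w)%N.
Proof.
rewrite occurrences_cat addnAC leq_add2r.
apply: (@leq_trans (\sum_(0 <= i < size x)
                      (occurs_at w x i + (size x < i + size w))%N)).
  rewrite big_seq [X in (_ <= X)%N]big_seq.
  apply: leq_sum => i; rewrite mem_index_iota => /andP [_ ix].
  case: ltnP => straddle; first by rewrite addn1 (leq_trans (leq_b1 _)).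
  rewrite addn0 /occurs_at drop_cat ix takel_cat // size_drop; lia.
rewrite big_split leq_add2l /=.
have [wx|xw] := leqP (size w) (size x); last first.
  by apply: leq_trans (sum_bool_nat_le _ _ _) _; rewrite subn0 ltnW.
rewrite (@big_cat_nat _ _ _ (size x - size w)) ?leq_subr //= big_nat big1.
  by rewrite add0n; apply: leq_trans (sum_bool_nat_le _ _ _) _; rewrite subKn.
by move=> i /andP [_ iw]; apply/eqP; rewrite eqb0 -leqNgt; lia.
Qed.

Lemma occurrences_letter c v : occurrences [:: c] v = count_mem c v.
Proof.
elim: v => [|a v IH]; first by rewrite /occurrences big_geq.
rewrite /occurrences /= big_nat_recl //= -/(occurrences [:: c] v) IH.
by rewrite /occurs_at /= take0 eqseq_cons andbT.
Qed.

End Occurrences.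

Lemma cat_eq_cases (T : Type) (x y p z : seq T) : x ++ y = p ++ z ->
  (exists2 q, x = p ++ q & z = q ++ y) \/ (exists2 q, p = x ++ q & y = q ++ z).
Proof.
elim: x p => [|a x IH] [|c p] /=.
- by left; exists [::].
- by move=> ->; right; exists (c :: p).
- by move=> <-; left; exists (a :: x).
- by case=> -> /IH [[q -> ->]|[q -> ->]]; [left|right]; exists q.
Qed.

Lemma infix_cat_cases (T : eqType) (v x y : seq T) : infix v (x ++ y) ->
  [\/ infix v x, infix v y |
      exists v1 v2, [/\ v = v1 ++ v2, suffix v1 x & prefix v2 y]].
Proof.
case/infixP => p [s /cat_eq_cases [[q Ex]|[q _ ->]]]; last first.
  by apply: Or32; apply/infixP; exists q, s.
case/cat_eq_cases => [[r -> ->]|[r Eq _]].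
  apply: Or33; exists q, r; split => //.
    by apply/suffixP; exists p.
  by apply/prefixP; exists s.
by apply: Or31; apply/infixP; exists p, r; rewrite Ex Eq.
Qed.

Section QuasiAdditive.
Variables (R : realDomainType) (B : eqType) (D : seq B -> R) (e K : R).
Hypothesis D_cat : forall x y, `|D (x ++ y) - (D x + D y)| <= e.
Variables (I : Type) (tau : I -> seq B) (beta Bm : nat).
Hypothesis D_tau : forall i, D (tau i) = 0.
Hypothesis tau_long : forall i, (beta <= size (tau i))%N.
Hypothesis tau_short : forall i, (size (tau i) <= Bm)%N.
Hypothesis D_short : forall v, (size v <= Bm)%N -> `|D v| <= K.

Let K_ge0 : 0 <= K.
Proof. exact: le_trans (normr_ge0 _) (D_short (v := [::]) (leq0n Bm)). Qed.

Let e_ge0 : 0 <= e.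
Proof. exact: le_trans (normr_ge0 _) (D_cat [::] [::]). Qed.

Let D_tau_cat i v : `|D (tau i ++ v)| <= `|D v| + e.
Proof.
have := D_cat (tau i) v; rewrite D_tau add0r => D_tau_v.
by have := ler_normD (D (tau i ++ v) - D v) (D v); rewrite subrK; lra.
Qed.

Lemma quasi_additive_prefix u v : prefix v (flatten (map tau u)) ->
  exists2 j : nat, (j * beta <= size v)%N & `|D v| <= K + e * j%:R.
Proof.
elim: u v => [|i u IH] v /=.
  by case: v => // _; exists 0%N; rewrite // mulr0 addr0 D_short.
case/prefixP => s /cat_eq_cases [[q Etau _]|[q -> Eu]].
  exists 0%N; rewrite // mulr0 addr0 D_short // (leq_trans _ (tau_short i)) //.
  by rewrite Etau size_cat leq_addr.
have [|j jq Dq] := IH q; first by apply/prefixP; exists s.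
exists j.+1; first by rewrite mulSn size_cat leq_add.
by apply: le_trans (D_tau_cat i q) _; rewrite -natr1 mulrDr mulr1; lra.
Qed.

Lemma quasi_additive_infix u v : infix v (flatten (map tau u)) ->
  exists2 j : nat, (j * beta <= size v)%N & `|D v| <= K *+ 2 + e * j.+1%:R.
Proof.
have short_bound w : (size w <= Bm)%N -> `|D w| <= K *+ 2 + e * 1%:R.
  by move=> /D_short; have := K_ge0; have := e_ge0; rewrite mulr2n; lra.
elim: u v => [|i u IH] v /=.
  by case: v => // _; exists 0%N; rewrite ?short_bound.
case/infix_cat_cases => [vi|/IH //|[v1 [v2 [-> v1i v2u]]]].
  by exists 0%N; rewrite ?short_bound // (leq_trans (size_infix vi)).
have [j jv2 Dv2] := quasi_additive_prefix v2u.
exists j; first by rewrite size_cat (leq_trans jv2) ?leq_addl.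
have Dv1 := D_short (leq_trans (size_suffix v1i) (tau_short i)).
have := D_cat v1 v2; have := ler_normD (D v1) (D v2).
have := ler_normD (D (v1 ++ v2) - (D v1 + D v2)) (D v1 + D v2); rewrite subrK.
move=> ? ? ?; rewrite -natr1 mulrDr mulr1 mulr2n; lra.
Qed.

End QuasiAdditive.

Section Discrepancy.
Variables (R : realDomainType) (B : finType) (w : seq B) (F : B -> R).

Definition discrepancy (v : seq B) : R :=
  (occurrences w v)%:R - \sum_(c : B) F c * (count_mem c v)%:R.

Lemma discrepancy_cat x y :
  `|discrepancy (x ++ y) - (discrepancy x + discrepancy y)| <= (size w)%:R.
Proof.
have -> : discrepancy (x ++ y) - (discrepancy x + discrepancy y) =
    (occurrences w (x ++ y))%:R - ((occurrences w x)%:R + (occurrences w y)%:R).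
  rewrite /discrepancy.
  under eq_bigr do rewrite count_cat natrD mulrDr.
  rewrite big_split /=; set Fx := \sum_(c : B) _; set Fy := \sum_(c : B) _; lra.
have ge := occurrences_cat_ge w x y; have le := occurrences_cat_le w x y.
rewrite -natrD -(subnK ge) natrD addrK ger0_norm ?ler_nat ?leq_subLR //.
Qed.

Lemma discrepancy_le_size v :
  `|discrepancy v| <= (1 + \sum_(c : B) `|F c|) * (size v)%:R.
Proof.
rewrite /discrepancy mulrDl mul1r (le_trans (ler_normB _ _)) // lerD //.
  by rewrite normr_nat ler_nat occurrences_le_size.
rewrite (le_trans (ler_norm_sum _ _ _)) // mulr_suml ler_sum // => c _.
by rewrite normrM normr_nat ler_wpM2l ?ler_nat ?count_size.
Qed.

End Discrepancy.

Section Levels.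
Variables (A : nat -> finType) (sigma : forall n, A n.+1 -> seq (A n)).

Definition letter_image n (a : A n) : seq (A 0%N) := sigma0n sigma n [:: a].

Lemma sigma0n_cat n (u v : seq (A n)) :
  sigma0n sigma n (u ++ v) = sigma0n sigma n u ++ sigma0n sigma n v.
Proof.
by elim: n u v => //= n IH u v; rewrite /subst_word map_cat flatten_cat IH.
Qed.

Lemma sigma0n_flatten n (u : seq (A n)) :
  sigma0n sigma n u = flatten (map (@letter_image n) u).
Proof.
elim: u => [|a u IH] /=; first by elim: n => //= n.
by rewrite -cat1s sigma0n_cat IH.
Qed.

Lemma letter_imageS n (a : A n.+1) :
  letter_image a = sigma0n sigma n (sigma a).
Proof. by rewrite /letter_image /= /subst_word /= cats0. Qed.

Lemma sigma0n_infix n (u v : seq (A n)) :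
  infix u v -> infix (sigma0n sigma n u) (sigma0n sigma n v).
Proof.
case/infixP => p [s ->]; rewrite !sigma0n_cat.
by apply/infixP; exists (sigma0n sigma n p), (sigma0n sigma n s).
Qed.

Lemma sigma0n_add k n (u : seq (A (k + n))) :
  exists v : seq (A n), sigma0n sigma (k + n) u = sigma0n sigma n v.
Proof. by elim: k u => [|k IH] u; [exists u | apply: IH]. Qed.

Hypothesis letters_covered : forall n (a : A n), exists c : A n.+1, a \in sigma c.

Lemma letter_image_infix_up k n (a : A n) :
  exists c : A (k + n), infix (letter_image a) (letter_image c).
Proof.
elim: k => [|k [c ac]]; first by exists a; apply: infix_refl.
have [d cd] := letters_covered c; exists d.
rewrite (infix_trans ac) // letter_imageS /letter_image.
by apply: sigma0n_infix; rewrite infix1s.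
Qed.

Lemma letter_image_at_level n m (a : A m) :
  exists u : seq (A n), infix (letter_image a) (flatten (map (@letter_image n) u)).
Proof.
have [nm|mn] := leqP n m.
  have := @sigma0n_add (m - n) n; rewrite subnK // => /(_ [:: a]) [u au].
  by exists u; rewrite -sigma0n_flatten -au infix_refl.
have := @letter_image_infix_up (n - m) m; rewrite subnK; last exact: ltnW.
by move=> /(_ a) [c ac]; exists [:: c]; rewrite /= cats0.
Qed.

End Levels.

Lemma sum_count_mem (T : finType) (s : seq T) (f : T -> nat) :
  (\sum_(x <- s) f x = \sum_(x : T) count_mem x s * f x)%N.
Proof.
elim: s => [|y s IH]; first by rewrite big_nil big1.
rewrite big_cons IH [RHS](eq_bigr (fun x => (y == x) * f x + count_mem x s * f x)%N);
  last by move=> x _; rewrite /= mulnDl.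
rewrite big_split /=; congr (_ + _)%N.
rewrite (bigD1 y) //= eqxx mul1n big1 ?addn0 // => x /negbTE.
by rewrite eq_sym => ->.
Qed.

Lemma sum_enum_val (V : nmodType) (T : finType) (f : T -> V) :
  \sum_(x : T) f x = \sum_(i < #|T|) f (enum_val i).
Proof. by rewrite (reindex (@enum_val T predT)) //; apply/onW_bij/enum_val_bij. Qed.

Section IncidenceProducts.
Variables (R : comNzRingType) (A : nat -> finType).
Variable sigma : forall n, A n.+1 -> seq (A n).

Fixpoint incidence_prod n : 'M[R]_(#|A 0%N|, #|A n|) :=
  match n return 'M[R]_(#|A 0%N|, #|A n|) with
  | 0 => 1%:M
  | m.+1 => incidence_prod m *m incidence_matrix R sigma m
  end.

Lemma count_letter_imageS n (a : A n.+1) (c : A 0%N) :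
  count_mem c (letter_image sigma a) =
  (\sum_(b : A n) count_mem b (sigma a) * count_mem c (letter_image sigma b))%N.
Proof.
rewrite letter_imageS sigma0n_flatten count_flatten sumnE.
by rewrite big_map big_map sum_count_mem.
Qed.

Lemma incidence_prodE n i j : incidence_prod n i j =
  (count_mem (enum_val i) (letter_image sigma (enum_val j)))%:R.
Proof.
elim: n i j => [|n IH] i j /=.
  by rewrite mxE /letter_image /= addn0 (inj_eq enum_val_inj) eq_sym.
rewrite mxE count_letter_imageS natr_sum [RHS]sum_enum_val.
by apply: eq_bigr => k _; rewrite IH mxE natrM mulrC.
Qed.

Hypothesis incidence_invertible :
  forall n, mx_invertible (incidence_matrix R sigma n).

Lemma letters_covered_of_invertible n (a : A n) :
  exists c : A n.+1, a \in sigma c.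
Proof.
apply: contrapT => uncovered.
have [N [/matrixP/(_ (enum_rank a) (enum_rank a)) MN _]] := incidence_invertible n.
move: MN; rewrite !mxE eqxx big1 => [/esym/eqP|k _]; first by rewrite oner_eq0.
rewrite mxE enum_rankK; case: (boolP (a \in sigma (enum_val k))) => [ak|].
  by case: uncovered; exists (enum_val k).
by move/count_memPn => ->; rewrite mul0r.
Qed.

Lemma incidence_prod_left_inverse n :
  exists G : 'M[R]_(#|A n|, #|A 0%N|), G *m incidence_prod n = 1%:M.
Proof.
elim: n => [|n [G GM]]; first by exists 1%:M; rewrite mul1mx.
have [N [_ NM]] := incidence_invertible n.
by exists (N *m G); rewrite /= mulmxA -(mulmxA N) GM mulmx1 NM.
Qed.

Lemma occurrences_linear_on_level w n : exists F : A 0%N -> R,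
  forall a : A n, (occurrences w (letter_image sigma a))%:R =
                  \sum_(c : A 0%N) F c * (count_mem c (letter_image sigma a))%:R.
Proof.
have [G GM] := incidence_prod_left_inverse n.
pose y (j : 'I_#|A n|) : R := (occurrences w (letter_image sigma (enum_val j)))%:R.
exists (fun c => \sum_(j < #|A n|) y j * G j (enum_rank c)) => a.
rewrite sum_enum_val; under eq_bigr => i _ do rewrite mulr_suml.
rewrite exchange_big /=.
transitivity (\sum_(j < #|A n|) y j * (G *m incidence_prod n) j (enum_rank a)).
  rewrite GM (bigD1 (enum_rank a)) //= big1 => [|j /negbTE ja]; last first.
    by rewrite mxE ja mulr0.
  by rewrite mxE eqxx mulr1 addr0 /y enum_rankK.
apply: eq_bigr => j _; rewrite mxE mulr_sumr; apply: eq_bigr => i _.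
by rewrite enum_valK incidence_prodE enum_rankK mulrA.
Qed.

End IncidenceProducts.

Section RealMeasure.
Variables (d : measure_display) (T : measurableType d) (R : realType).
Variable mu : probability T R.
Implicit Types E F : set T.

Definition rmeasure E : R := fine (mu E).

Lemma rmeasureE E : measurable E -> mu E = (rmeasure E)%:E.
Proof. by move=> mE; rewrite fineK ?fin_num_measure. Qed.

Lemma rmeasure_ge0 E : 0 <= rmeasure E.
Proof. by rewrite fine_ge0. Qed.

Lemma rmeasure_le1 E : measurable E -> rmeasure E <= 1.
Proof. by move=> mE; rewrite -lee_fin -rmeasureE ?probability_le1. Qed.

Lemma rmeasureT : rmeasure setT = 1.
Proof. by rewrite /rmeasure probability_setT. Qed.

Lemma rmeasure0 : rmeasure set0 = 0.
Proof. by rewrite /rmeasure measure0. Qed.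

Lemma rmeasureU E F : measurable E -> measurable F -> E `&` F = set0 ->
  rmeasure (E `|` F) = rmeasure E + rmeasure F.
Proof. by move=> mE mF EF; rewrite /rmeasure measureU // fineD ?fin_num_measure. Qed.

Lemma rmeasure_outside_full E F : measurable E -> measurable F ->
  rmeasure F = 1 -> E `&` F = set0 -> rmeasure E = 0.
Proof.
move=> mE mF F1 EF; have := rmeasure_le1 (measurableU _ _ mE mF).
by rewrite rmeasureU // F1; have := rmeasure_ge0 E; lra.
Qed.

End RealMeasure.

Section Factors.
Variable B : Type.
Implicit Types x : int -> B.

Lemma size_factor_at x i k : size (factor_at x i k) = k.
Proof. by rewrite size_map size_iota. Qed.

Lemma factor_atS x i k : factor_at x i k.+1 = x i :: factor_at x (i + 1) k.
Proof.
rewrite /factor_at /= addr0 -[1%N]addn0 iotaDl -map_comp.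
by congr (_ :: _); apply: eq_map => j /=; rewrite PoszD addrA.
Qed.

Lemma take_drop_factor_at x j L i k :
  take k (drop i (factor_at x j L)) = factor_at x (j + i%:Z) (minn k (L - i)).
Proof.
rewrite /factor_at -map_drop -map_take drop_iota take_iota add0n.
by rewrite -{1}(addn0 i) iotaDl -map_comp; apply: eq_map => l /=; rewrite PoszD addrA.
Qed.

Lemma nth_factor_at (d : B) x j L l : (l < L)%N ->
  nth d (factor_at x j L) l = x (j + l%:Z).
Proof. by move=> lL; rewrite (nth_map 0%N) ?size_iota // nth_iota. Qed.

End Factors.

Section Cylinders.
Variables (B : finType) (b : B).
Local Notation T := (shift_space b).

Definition cylinder (i : int) (t : seq B) : set T :=
  [set x | factor_at x i (size t) = t].

Definition window (i : int) (k : nat) (P : set (seq B)) : set T :=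
  [set x | P (factor_at x i k)].

Lemma cylinder_tuple_eq i k (t t' : k.-tuple B) x :
  cylinder i t x -> cylinder i t' x -> t = t'.
Proof.
by rewrite /cylinder /= !size_tuple => tx t'x; apply: val_inj; rewrite /= -tx.
Qed.

Lemma cylinder_tuple_cover i k (x : T) : exists t : k.-tuple B, cylinder i t x.
Proof.
exists (Tuple (introT eqP (size_factor_at x i k))).
by rewrite /cylinder /= size_factor_at.
Qed.

Lemma measurable_cylinder i t : measurable (cylinder i t).
Proof.
elim: t i => [|a t IH] i.
  by rewrite [cylinder _ _](_ : _ = setT) //; apply/seteqP; split.
rewrite [cylinder _ _](_ : _ = [set x : T | x i = a] `&` cylinder (i + 1) t).
  by apply: measurableI => //; apply: sub_sigma_algebra; exists i, a.
by apply/seteqP; split => x; rewrite /cylinder /= factor_atS => -[-> ->].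
Qed.

Lemma window_cylinders i k P :
  window i k P = \bigcup_(t in [set t : k.-tuple B | P t]) cylinder i t.
Proof.
apply/seteqP; split => x /=.
  move=> Px; have [t xt] := cylinder_tuple_cover i k x.
  by exists t => //=; move: xt; rewrite /cylinder /= size_tuple => <-.
by case=> t /= Pt; rewrite /cylinder /window /= size_tuple => ->.
Qed.

Lemma measurable_window i k P : measurable (window i k P).
Proof.
rewrite window_cylinders; apply: fin_bigcup_measurable => [|t _].
  exact: finite_finset.
exact: measurable_cylinder.
Qed.

Lemma factor_at_shift (x : T) i k :
  factor_at (Defs.shift b x) i k = factor_at x (i + 1) k.
Proof. by apply: eq_map => j /=; rewrite /Defs.shift addrAC. Qed.

Lemma shift_preimage_cylinder i t :
  Defs.shift b @^-1` cylinder i t = cylinder (i + 1) t.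
Proof. by apply/seteqP; split => x; rewrite /preimage /cylinder /= factor_at_shift. Qed.

Lemma letter_cylE a : letter_cyl b a = cylinder 1 [:: a].
Proof.
by apply/seteqP; split => x; rewrite /letter_cyl /cylinder /factor_at /= addr0;
  [move=> -> | case].
Qed.

End Cylinders.

Arguments cylinder {B} b i t.
Arguments window {B} b i k P.

Section CylinderMeasure.
Variables (R : realType) (B : finType) (b : B).
Variable mu : probability (shift_space b) R.
Local Notation rmu := (rmeasure mu).

Lemma rmeasure_cylinders_seq E j k (s : seq (k.-tuple B)) :
  measurable E -> uniq s ->
  rmu (E `&` \big[setU/set0]_(t <- s) cylinder b j t) =
  \sum_(t <- s) rmu (E `&` cylinder b j t).
Proof.
move=> mE; elim: s => [|t s IH]; first by rewrite !big_nil setI0 rmeasure0.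
case/andP => ts us; rewrite !big_cons setIUr rmeasureU ?IH //.
- by apply: measurableI => //; apply: measurable_cylinder.
- apply: measurableI => //; apply: bigsetU_measurable => t' _.
  exact: measurable_cylinder.
apply/seteqP; split => x //= [[_ tx] [_]].
rewrite -bigcup_seq => -[t' /= t's t'x].
by move: ts; rewrite (cylinder_tuple_eq tx t'x) t's.
Qed.

Lemma rmeasure_cylinders E j k : measurable E ->
  rmu E = \sum_(t : k.-tuple B) rmu (E `&` cylinder b j t).
Proof.
move=> mE; rewrite -rmeasure_cylinders_seq ?index_enum_uniq //; congr rmu.
apply/seteqP; split => x; last by case.
move=> Ex; split => //; rewrite -bigcup_seq.
by have [t xt] := cylinder_tuple_cover j k x; exists t => //=; apply: mem_index_enum.
Qed.

Lemma sum_rmeasure_cylinders j k :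
  \sum_(t : k.-tuple B) rmu (cylinder b j t) = 1.
Proof.
rewrite -(rmeasureT mu) (rmeasure_cylinders j k measurableT).
by apply: eq_bigr => t _; rewrite setTI.
Qed.

Lemma rmeasure_window i k P :
  rmu (window b i k P) = \sum_(t : k.-tuple B | `[< P t >]) rmu (cylinder b i t).
Proof.
rewrite (rmeasure_cylinders i k (measurable_window i k P)) [RHS]big_mkcond /=.
apply: eq_bigr => t _; case: asboolP => Pt.
  congr rmu; apply/seteqP; split => [x [] //|x tx]; split => //.
  by move: (tx); rewrite /cylinder /window /= size_tuple => ->.
rewrite -(rmeasure0 mu); congr rmu; apply/seteqP; split => // x [Px].
by rewrite /cylinder /= size_tuple => xt; case: Pt; rewrite -xt.
Qed.

Hypothesis mu_shift : forall E, measurable E -> mu (Defs.shift b @^-1` E) = mu E.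

Lemma rmeasure_cylinder_translate i t :
  rmu (cylinder b i t) = rmu (cylinder b 1 t).
Proof.
have step j : rmu (cylinder b (j + 1) t) = rmu (cylinder b j t).
  by rewrite /rmeasure -shift_preimage_cylinder mu_shift //; apply: measurable_cylinder.
have from j (n : nat) : rmu (cylinder b (j + n%:Z) t) = rmu (cylinder b j t).
  by elim: n => [|n IH]; rewrite ?addr0 // -addn1 PoszD addrA step.
have [i1|i1] := lerP 1 i.
  have i1_ge0 : 0 <= i - 1 by rewrite subr_ge0.
  by rewrite -(subrKC 1 i) -(gez0_abs i1_ge0) from.
have i1_ge0 : 0 <= 1 - i by rewrite subr_ge0 ltW.
by rewrite -(from i `|1 - i|%N) gez0_abs // subrKC.
Qed.

Lemma occurs_at_overflow (w v : seq B) i :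
  (size v - i < size w)%N -> occurs_at w v i = false.
Proof.
move=> short; apply/negbTE/eqP => occ.
by move: short; rewrite -{1}occ size_take_min size_drop leq_min ltnn andbF.
Qed.

Lemma expected_occurs_at w k i : (i + size w <= k)%N ->
  \sum_(t : k.-tuple B) rmu (cylinder b 1 t) * (occurs_at w t i)%:R =
  rmu (cylinder b 1 w).
Proof.
move=> fits; rewrite -(rmeasure_cylinder_translate (1 + i%:Z) w).
rewrite (rmeasure_cylinders 1 k (measurable_cylinder _ w)); apply: eq_bigr => t _.
have occE x : cylinder b 1 t x ->
    occurs_at w t i = (factor_at x (1 + i%:Z) (size w) == w).
  rewrite /cylinder /= size_tuple => <-.
  rewrite /occurs_at take_drop_factor_at; congr (factor_at _ _ _ == _).
  by apply/minn_idPl; lia.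
case: (boolP (occurs_at w t i)) => occ; rewrite ?mulr1 ?mulr0.
  congr rmu; apply/seteqP; split => [x tx|x [] //]; split => //.
  by apply/eqP; rewrite -occE.
rewrite -(rmeasure0 mu); congr rmu; apply/seteqP; split => // x [wx tx].
by move: occ; rewrite (occE x tx) wx eqxx.
Qed.

Lemma expected_occurrences w k : (0 < size w <= k)%N ->
  \sum_(t : k.-tuple B) rmu (cylinder b 1 t) * (occurrences w t)%:R =
  (k - size w).+1%:R * rmu (cylinder b 1 w).
Proof.
case/andP => w0 wk.
transitivity (\sum_(0 <= i < k)
                \sum_(t : k.-tuple B) rmu (cylinder b 1 t) * (occurs_at w t i)%:R).
  rewrite exchange_big /=; apply: eq_bigr => t _.
  by rewrite /occurrences size_tuple natr_sum mulr_sumr.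
have split_k : ((k - size w).+1 <= k)%N by lia.
rewrite (big_cat_nat (leq0n _) split_k) /=.
rewrite [X in _ + X]big_nat [X in _ + X]big1 ?addr0 => [|i /andP [wi ik]]; last first.
  by apply: big1 => t _; rewrite occurs_at_overflow ?mulr0 // size_tuple; lia.
rewrite big_nat (eq_bigr (fun=> rmu (cylinder b 1 w))) => [|i /andP [_ ik]].
  by rewrite -big_nat sumr_const_nat subn0 mulr_natl.
by apply: expected_occurs_at; rewrite addnC -leq_subRL // -ltnS.
Qed.

Lemma expected_discrepancy (w : seq B) (F : B -> R) k : (0 < size w <= k)%N ->
  \sum_(t : k.-tuple B) rmu (cylinder b 1 t) * discrepancy w F t =
  (k - size w).+1%:R * rmu (cylinder b 1 w) -
  k%:R * \sum_(c : B) F c * rmu (cylinder b 1 [:: c]).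
Proof.
move=> /andP [w0 wk]; rewrite /discrepancy.
under eq_bigr do rewrite mulrBr.
rewrite sumrB expected_occurrences ?w0 //; congr (_ - _).
under eq_bigr do rewrite mulr_sumr.
rewrite exchange_big mulr_sumr /=; apply: eq_bigr => c _.
have k_gt0 : (0 < k)%N := leq_trans w0 wk.
transitivity
  (F c * \sum_(t : k.-tuple B) rmu (cylinder b 1 t) * (occurrences [:: c] t)%:R).
  by rewrite mulr_sumr; apply: eq_bigr => t _; rewrite occurrences_letter mulrCA.
by rewrite expected_occurrences ?k_gt0 //= subn1 prednK // mulrCA.
Qed.

End CylinderMeasure.

Section CenteredWindows.
Variables (B : finType) (b : B).
Local Notation T := (shift_space b).

Definition centered_windows : set (set T) :=
  [set E | exists k P, E = window b (- k%:Z) (2 * k).+1 P].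

Lemma centered_window_restrict (x : int -> B) k1 k : (k1 <= k)%N ->
  take (2 * k1).+1 (drop (k - k1) (factor_at x (- k%:Z) (2 * k).+1)) =
  factor_at x (- k1%:Z) (2 * k1).+1.
Proof.
move=> k1k; rewrite take_drop_factor_at; congr factor_at; first lia.
by apply/minn_idPl; lia.
Qed.

Lemma centered_windows_setI : setI_closed centered_windows.
Proof.
move=> _ _ [k1 [P1 ->]] [k2 [P2 ->]]; pose k := maxn k1 k2.
exists k, (fun v => P1 (take (2 * k1).+1 (drop (k - k1) v)) /\
                   P2 (take (2 * k2).+1 (drop (k - k2) v))).
apply/seteqP; split => x;
  by rewrite /window /= !centered_window_restrict ?leq_maxl ?leq_maxr.
Qed.

Lemma measurable_centered_windows : measurable = <<s centered_windows >>.
Proof.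
apply/seteqP; split; last first.
  apply: smallest_sub; first exact: sigma_algebra_measurable.
  by move=> _ [k [P ->]]; apply: measurable_window.
apply: smallest_sub; first exact: smallest_sigma_algebra.
move=> _ [i [a ->]]; apply: sub_sigma_algebra; pose k := absz i.
exists k, (fun v => nth b v (absz (i + k%:Z)) = a).
have centre : - k%:Z + (absz (i + k%:Z))%:Z = i by lia.
by apply/seteqP; split => x; rewrite /window /= nth_factor_at ?centre //; lia.
Qed.

Variables (R : realType) (mu mu' : probability T R).
Hypothesis mu_shift : forall E, measurable E -> mu (Defs.shift b @^-1` E) = mu E.
Hypothesis mu'_shift : forall E, measurable E -> mu' (Defs.shift b @^-1` E) = mu' E.
Hypothesis mu_mu'_cylinder : forall t, mu (cylinder b 1 t) = mu' (cylinder b 1 t).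

Lemma eq_shift_invariant_probability E : measurable E -> mu E = mu' E.
Proof.
apply: (measure_unique centered_windows (fun=> setT)).
- exact: measurable_centered_windows.
- exact: centered_windows_setI.
- by move=> _; exists 0%N, setT; apply/seteqP; split.
- by rewrite bigcup_const.
- move=> _ [k [P ->]]; set W := window b _ _ _.
  change (mu W = mu' W).
  have mW : measurable W := measurable_window _ _ _.
  rewrite (rmeasureE mu mW) (rmeasureE mu' mW) !rmeasure_window; congr EFin.
  apply: eq_bigr => t _; rewrite !rmeasure_cylinder_translate //.
  by rewrite /rmeasure mu_mu'_cylinder.
- by move=> _; rewrite (le_lt_trans (probability_le1 mu measurableT)) ?ltry.
Qed.

End CenteredWindows.

Lemma measurable_gen_subshift (A : nat -> finType)
    (sigma : forall n, A n.+1 -> seq (A n)) (b : A 0%N) :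
  measurable (gen_subshift sigma b : set (shift_space b)).
Proof.
pose factor v := exists n (a : A n), infix v (sigma0n sigma n [:: a]).
pose position p : int * nat := odflt (0, 0%N) (unpickle p).
rewrite [gen_subshift _ _](_ : _ =
    \bigcap_(p in setT) window b (position p).1 (position p).2 factor).
  by apply: bigcap_measurableType => p _; apply: measurable_window.
apply/seteqP; split => [x Xx p _|x Wx i k]; first exact: Xx.
by have := Wx (pickle (i, k)) I; rewrite /position pickleK.
Qed.

Arguments measurable_gen_subshift {A} sigma b.

Section DiscrepancyEstimate.
Variables (R : realType) (A : nat -> finType) (sigma : forall n, A n.+1 -> seq (A n)).
Variable b : A 0%N.
Local Notation B := (A 0%N).
Hypothesis letters_covered : forall n (a : A n), exists c : A n.+1, a \in sigma c.
Variables (n : nat) (w : seq B) (F : B -> R) (beta Bm : nat).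
Hypothesis discrepancy_level :
  forall a : A n, discrepancy w F (letter_image sigma a) = 0.
Hypothesis beta_gt0 : (0 < beta)%N.
Hypothesis level_long : forall a : A n, (beta <= size (letter_image sigma a))%N.
Hypothesis level_short : forall a : A n, (size (letter_image sigma a) <= Bm)%N.
Local Notation K := ((1 + \sum_(c : B) `|F c|) * Bm%:R).

Lemma discrepancy_factor_bound m (a : A m) t : infix t (letter_image sigma a) ->
  `|discrepancy w F t| <= K *+ 2 + (size w)%:R * ((size t)%:R / beta%:R + 1).
Proof.
move=> ta; have [u au] := letter_image_at_level letters_covered n a.
have short v : (size v <= Bm)%N -> `|discrepancy w F v| <= K.
  move=> vBm; apply: le_trans (discrepancy_le_size w F v) _.
  by rewrite ler_wpM2l ?ler_nat // addr_ge0 ?sumr_ge0.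
have [j jt] := quasi_additive_infix (discrepancy_cat w F) discrepancy_level
                 level_long level_short short (infix_trans ta au).
move/le_trans; apply; rewrite lerD2l ler_wpM2l // -natr1 lerD2r.
by rewrite ler_pdivlMr ?ltr0n // -natrM ler_nat.
Qed.

Variable mu : probability (shift_space b) R.
Hypothesis mu_X : mu (gen_subshift sigma b) = 1%E.
Hypothesis mu_shift : forall E, measurable E -> mu (Defs.shift b @^-1` E) = mu E.
Local Notation rmu := (rmeasure mu).

Lemma factor_of_cylinder_neq0 k (t : k.-tuple B) : rmu (cylinder b 1 t) != 0 ->
  exists m (a : A m), infix t (letter_image sigma a).
Proof.
apply: contra_neqP => not_factor.
have X1 : rmu (gen_subshift sigma b) = 1 by rewrite /rmeasure mu_X.
apply: (rmeasure_outside_full (measurable_cylinder 1 t)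
                              (measurable_gen_subshift sigma b) X1).
apply/seteqP; split => // x [tx /(_ 1 k) [m [a xa]]].
by apply: not_factor; exists m, a; move: tx; rewrite /cylinder /= size_tuple => <-.
Qed.

Lemma expected_discrepancy_bound k : (0 < size w <= k)%N ->
  `|(k - size w).+1%:R * rmu (cylinder b 1 w) -
    k%:R * \sum_(c : B) F c * rmu (cylinder b 1 [:: c])|
  <= K *+ 2 + (size w)%:R * (k%:R / beta%:R + 1).
Proof.
move=> wk; rewrite -(expected_discrepancy mu_shift) //.
set bound := (X in _ <= X); apply: le_trans (ler_norm_sum _ _ _) _.
rewrite -[bound]mul1r -(sum_rmeasure_cylinders mu 1 k) mulr_suml ler_sum // => t _.
rewrite normrM ger0_norm ?rmeasure_ge0 //.
have [->|/factor_of_cylinder_neq0 [m [a ta]]] := eqVneq (rmu (cylinder b 1 t)) 0.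
  by rewrite !mul0r.
rewrite ler_wpM2l ?rmeasure_ge0 //.
by apply: le_trans (discrepancy_factor_bound ta) _; rewrite size_tuple.
Qed.

End DiscrepancyEstimate.

Lemma le_of_affine_bound (R : archiFieldType) (d a c : R) (s : nat) :
  (forall k : nat, (s <= k)%N -> d * (k - s).+1%:R <= c + a * k%:R) -> d <= a.
Proof.
move=> bound; rewrite leNgt; apply/negP => ad.
have da_gt0 : 0 < d - a by rewrite subr_gt0.
pose C := `|c| + `|a| * s%:R + `|d|.
have C_ge0 : 0 <= C by rewrite !addr_ge0 ?mulr_ge0.
have := archi_boundP (divr_ge0 C_ge0 (ltW da_gt0)); set M := Num.bound _.
rewrite ltr_pdivrMr // => CM.
have := bound (s + M)%N (leq_addr _ _); rewrite addKn natrD -natr1.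
have := ler_norm c; have := ler_wpM2r (ler0n R s) (ler_norm a).
have := ler_norm (- d); rewrite normrN /C in CM *.
move: (M%:R) (s%:R) CM => m s' ? ? ? ? ?; nra.
Qed.

Lemma eq_of_dist_le_inv (R : archiFieldType) (x y c : R) :
  (forall N : nat, (0 < N)%N -> `|x - y| <= c / N%:R) -> x = y.
Proof.
move=> small; apply/eqP; rewrite -subr_eq0 -normr_le0 leNgt; apply/negP => dxy.
have ratio_ge0 := divr_ge0 (normr_ge0 c) (ltW dxy).
have cN := archi_boundP ratio_ge0; set N := Num.bound _ in cN.
have N_gt0 : (0 < N)%N by rewrite -(ltr_nat R) (le_lt_trans ratio_ge0).
rewrite ltr_pdivrMr // in cN.
have := small N N_gt0; rewrite ler_pdivlMr ?ltr0n //.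
by have := ler_norm c; lra.
Qed.

Lemma dist_le_of_scaled_approx (R : realDomainType) (l m m' P E : R) :
  0 <= l -> `|l * m - P| <= E -> `|l * m' - P| <= E -> `|m - m'| * l <= E *+ 2.
Proof.
move=> l_ge0 dev dev'; have := ler_normB (l * m - P) (l * m' - P).
have -> : (l * m - P) - (l * m' - P) = l * (m - m') by ring.
by rewrite normrM ger0_norm // mulrC mulr2n => /le_trans; apply; apply: lerD.
Qed.

Section CylinderUniqueness.
Variables (R : realType) (A : nat -> finType) (sigma : forall n, A n.+1 -> seq (A n)).
Variable b : A 0%N.
Local Notation B := (A 0%N).
Hypothesis growing : everywhere_growing sigma.
Hypothesis invertible : forall n, mx_invertible (incidence_matrix R sigma n).
Variables mu mu' : probability (shift_space b) R.
Hypothesis mu_invariant : invariant_measure_on (gen_subshift sigma b) mu.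
Hypothesis mu'_invariant : invariant_measure_on (gen_subshift sigma b) mu'.
Hypothesis same_letters : forall a : B, mu (letter_cyl b a) = mu' (letter_cyl b a).

Lemma dist_rmeasure_cylinder_le w N : (0 < size w)%N -> (0 < N)%N ->
  `|rmeasure mu (cylinder b 1 w) - rmeasure mu' (cylinder b 1 w)| <=
  (size w)%:R *+ 2 / N%:R.
Proof.
move=> w_gt0 N_gt0.
case: mu_invariant mu'_invariant => [mu_X mu_shift] [mu'_X mu'_shift].
have [n long] := growing N.
have [F occ_linear] := occurrences_linear_on_level invertible w n.
have D_level (a : A n) : discrepancy w F (letter_image sigma a) = 0.
  by rewrite /discrepancy occ_linear subrr.
pose Bm := (\max_(a : A n) size (letter_image sigma a))%N.
have short (a : A n) : (size (letter_image sigma a) <= Bm)%N.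
  exact: (@leq_bigmax _ (fun a => size (letter_image sigma a))).
have bound := expected_discrepancy_bound (letters_covered_of_invertible invertible)
                D_level N_gt0 (long n (leqnn n)) short.
have same_letter_sum : \sum_(a : B) F a * rmeasure mu' (cylinder b 1 [:: a]) =
                       \sum_(a : B) F a * rmeasure mu (cylinder b 1 [:: a]).
  by apply: eq_bigr => a _; rewrite /rmeasure -letter_cylE same_letters.
set K := (1 + \sum_(a : B) `|F a|) * Bm%:R.
apply: (@le_of_affine_bound _ _ _ ((K *+ 2 + (size w)%:R) *+ 2) (size w)) => k wk.
have wk' : (0 < size w <= k)%N by rewrite w_gt0.
have := bound _ _ mu'_X mu'_shift k wk'; rewrite same_letter_sum.
move/(dist_le_of_scaled_approx (ler0n _ _) (bound _ _ mu_X mu_shift k wk')).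
have -> : (K *+ 2 + (size w)%:R * (k%:R / N%:R + 1)) *+ 2 =
          (K *+ 2 + (size w)%:R) *+ 2 + (size w)%:R *+ 2 / N%:R * k%:R by ring.
by [].
Qed.

Lemma eq_rmeasure_cylinder w :
  rmeasure mu (cylinder b 1 w) = rmeasure mu' (cylinder b 1 w).
Proof.
case: w => [|c v]; last first.
  by apply: eq_of_dist_le_inv => N N_gt0; apply: dist_rmeasure_cylinder_le.
have -> : cylinder b 1 [::] = setT by apply/seteqP; split.
by rewrite !rmeasureT.
Qed.

End CylinderUniqueness.

Unset Implicit Arguments.

Theorem corollary6p3 (R : realType) (A : nat -> finType)
  (sigma : forall n : nat, A n.+1 -> seq (A n)) (b : A 0%N) :
  non_erasing sigma ->
  everywhere_growing sigma ->
  finite_alphabet_rank A ->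
  (forall n : nat, mx_invertible (incidence_matrix R sigma n)) ->
  forall mu mu' : probability (shift_space b) R,
    invariant_measure_on (gen_subshift sigma b) mu ->
    invariant_measure_on (gen_subshift sigma b) mu' ->
    (forall a : A 0%N, mu (letter_cyl b a) = mu' (letter_cyl b a)) ->
    forall E : set (shift_space b), measurable E -> mu E = mu' E.
Proof.
move=> _ growing _ invertible mu mu' mu_inv mu'_inv same_letters.
apply: (eq_shift_invariant_probability mu_inv.2 mu'_inv.2) => t.
have mt : measurable (cylinder b 1 t) := measurable_cylinder 1 t.
rewrite (rmeasureE mu mt) (rmeasureE mu' mt).
by rewrite (eq_rmeasure_cylinder growing invertible mu_inv mu'_inv).
Qed.
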